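(* Let $D$ be a strongly connected digraph with at least two vertices and girth $g$. Let $l=\min_{u\in V(D)} \lambda(u)$, where $\lambda(u)$ is the length of a longest directed path in $D$ starting at $u$. Then $\chi_A(D)\le \left\lceil\frac{l+1}{g-1}\right\rceil$.
   Context: Digraphs are finite and loopless; paths and cycles are directed. Girth is the length of a shortest directed cycle. $\chi_A(D)$ is the minimum number of colors in a vertex coloring of $D$ in which every color class induces an acyclic subdigraph. *)

From mathcomp Require Import all_boot.
Set Implicit Arguments. Unset Strict Implicit. Unset Printing Implicit Defensive.

Section Digraph.
Variables (V : finType) (e : rel V).

Definition loopless : Prop := forall x, ~~ e x x.

Definition strongly_connected : Prop := forall x y, connect e x y.

(* a directed path x = x_0 -> x_1 -> ... -> x_n with distinct vertices;
   its length is the number of arcs n = size p *)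
Definition dipath (x : V) (p : seq V) : bool := path e x p && uniq (x :: p).

(* a directed cycle through the distinct vertices x :: p, closing with the
   arc (last x p) -> x; its length is size p + 1 *)
Definition dicycle (x : V) (p : seq V) : bool :=
  [&& path e x p, e (last x p) x & uniq (x :: p)].

Definition is_girth (g : nat) : Prop :=
  (exists x p, dicycle x p /\ (size p).+1 = g) /\
  (forall x p, dicycle x p -> g <= (size p).+1).

Definition is_longest_path_from (u : V) (n : nat) : Prop :=
  (exists p, dipath u p /\ size p = n) /\
  (forall p, dipath u p -> size p <= n).

Definition is_min_longest_path (l : nat) : Prop :=
  (exists u, is_longest_path_from u l) /\
  (forall u n, is_longest_path_from u n -> l <= n).

(* a coloring c with k colors is acyclic iff every color class induces an
   acyclic subdigraph, i.e. no directed cycle is monochromatic *)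
Definition acyclic_coloring (k : nat) (c : V -> 'I_k) : Prop :=
  forall x p, dicycle x p -> ~ (forall y, y \in p -> c y = c x).

Definition chiA_le (m : nat) : Prop :=
  exists c : V -> 'I_m, acyclic_coloring c.

End Digraph.

Definition ceil_div (a b : nat) : nat := (a + b.-1) %/ b.

From mathcomp Require Import all_boot.
Set Implicit Arguments. Unset Strict Implicit. Unset Printing Implicit Defensive.

(* Fix a vertex u with lambda(u) = l and grow a maximal acyclic set H of arcs
   all of whose tails are H-reachable from u.  Maximality makes every vertex
   H-reachable from u and turns every arc v -> w outside H into a back arc:
   w reaches v inside H, so v -> w closes a cycle of length at most
   1 + (length of that H-path), whence that H-path has length >= g - 1.
   Let level(v) be the length of a longest H-walk from u to v; H-walks from u
   are directed paths, so level(v) <= l.  Arcs of H raise the level, and an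
   arc v -> w outside H lowers it by at least g - 1.  Colouring v by
   level(v) / (g - 1) therefore uses ceil((l + 1) / (g - 1)) colours, and
   inside a colour class every arc raises the level, so no class contains a
   directed cycle. *)

Section ArcSets.
Variable V : finType.

Definition arcrel (A : {set V * V}) : rel V := fun x y => (x, y) \in A.

Lemma connect_arcrel_setU1 (A : {set V * V}) a b x y :
  connect (arcrel ((a, b) |: A)) x y ->
  connect (arcrel A) x y \/ connect (arcrel A) x a /\ connect (arcrel A) b y.
Proof.
move=> /connectP [p]; elim: p x => [|z p IH] x /=; first by move=> _ ->; left.
case/andP; rewrite /arcrel in_setU1 => /orP [/eqP [-> ->] | Axz] /IH {}IH /IH.
  by case=> [bz | [_ bz]]; right.
case=> [zy | [za b_y]]; [left | right]; last split=> //;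
  exact: connect_trans (connect1 Axz) _.
Qed.

Lemma acyclic_path_uniq (h : rel V) x p :
  (forall y z, h y z -> ~~ connect h z y) -> path h x p -> uniq (x :: p).
Proof.
move=> hacyc; elim: p x => [|z p IH] x //= /andP [hxz hp].
have /= -> := IH z hp; rewrite andbT; apply/negP => xp.
by have := hacyc _ _ hxz; rewrite (path_connect hp xp).
Qed.

Lemma path_exit (h : rel V) (P : pred V) x p :
  path h x p -> P x -> ~~ P (last x p) ->
  exists a b, [/\ h a b, P a & ~~ P b].
Proof.
elim: p x => [|z p IH] x /=; first by move=> _ ->.
case/andP=> hxz hp Px; case Pz: (P z); first exact: IH.
by exists x, z; rewrite Pz.
Qed.

End ArcSets.

Section MaximalRootedDag.
Variables (V : finType) (e : rel V) (u : V).

Definition rooted_dag (A : {set V * V}) : bool :=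
  [&& A \subset [set a | e a.1 a.2],
      [forall a in A, ~~ connect (arcrel A) a.2 a.1] &
      [forall a in A, connect (arcrel A) u a.1]].

Lemma rooted_dagP (A : {set V * V}) :
  reflect [/\ subrel (arcrel A) e,
              forall x y, arcrel A x y -> ~~ connect (arcrel A) y x &
              forall x y, arcrel A x y -> connect (arcrel A) u x]
          (rooted_dag A).
Proof.
apply: (iffP and3P) => [[/subsetP sAe /forall_inP acyc /forall_inP root] | ].
  split=> x y Axy; [by have := sAe _ Axy; rewrite inE | exact: acyc Axy |].
  exact: root Axy.
case=> sAe acyc root; split.
- by apply/subsetP => -[x y] /sAe; rewrite inE.
- by apply/forall_inP => -[x y] /acyc.
- by apply/forall_inP => -[x y] /root.
Qed.

Lemma rooted_dag_setU1 (A : {set V * V}) a b :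
  rooted_dag A -> e a b -> connect (arcrel A) u a -> ~~ connect (arcrel A) b a ->
  rooted_dag ((a, b) |: A).
Proof.
case/rooted_dagP=> sAe acyc root eab ua nba.
have sAA' : subrel (arcrel A) (arcrel ((a, b) |: A)).
  by move=> x y; rewrite /arcrel in_setU1 => ->; rewrite orbT.
have mono : subrel (connect (arcrel A)) (connect (arcrel ((a, b) |: A))).
  by apply: connect_sub => x y /sAA' /connect1.
apply/rooted_dagP; split=> x y;
  rewrite /arcrel in_setU1 => /orP [/eqP [? ?] | Axy]; try subst x y.
- exact: eab.
- exact: sAe.
- by apply/negP => /connect_arcrel_setU1 [ba | [ba _]]; rewrite ba in nba.
- apply/negP => /connect_arcrel_setU1 [yx | [ya bx]].
    by have := acyc _ _ Axy; rewrite yx.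
  by move: nba; rewrite (connect_trans bx (connect_trans (connect1 Axy) ya)).
- exact: mono.
- exact: mono (root _ _ Axy).
Qed.

Definition max_rooted_dag : {set V * V} :=
  [arg max_(A > set0 | rooted_dag A) #|A|].

Local Notation H := (arcrel max_rooted_dag).

Lemma max_rooted_dagP :
  rooted_dag max_rooted_dag /\
  forall A, rooted_dag A -> #|A| <= #|max_rooted_dag|.
Proof.
rewrite /max_rooted_dag; case: arg_maxnP => //.
by apply/rooted_dagP; split=> x y; rewrite /arcrel in_set0.
Qed.

Lemma max_rooted_dag_closed a b :
  ~~ H a b -> e a b -> connect H u a -> connect H b a.
Proof.
move=> nHab eab ua; apply/negPn/negP => nba.
have [Hdag Hmax] := max_rooted_dagP.
have := Hmax _ (rooted_dag_setU1 Hdag eab ua nba).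
by rewrite cardsU1 nHab add1n ltnn.
Qed.

Lemma max_rooted_dag_source x y : H x y -> connect H u x.
Proof. by have [/rooted_dagP [_ _ root] _] := max_rooted_dagP; apply: root. Qed.

Hypothesis e_sc : strongly_connected e.

Lemma max_rooted_dag_reach v : connect H u v.
Proof.
apply/negPn/negP => nuv; have /connectP [p up vp] := e_sc u v; rewrite vp in nuv.
have [a [b [eab ua nub]]] := path_exit up (connect0 H u) nuv.
have nHab : ~~ H a b.
  by apply: contra nub => Hab; exact: connect_trans ua (connect1 Hab).
have /connectP [[|z q] /= bq ab] := max_rooted_dag_closed nHab eab ua.
  by move: nub; rewrite -ab ua.
by case/andP: bq => /max_rooted_dag_source ub _; rewrite ub in nub.
Qed.

Lemma max_rooted_dag_back v w : e v w -> ~~ H v w -> connect H w v.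
Proof. by move=> evw nHvw; apply: max_rooted_dag_closed (max_rooted_dag_reach v). Qed.

End MaximalRootedDag.

Section Levels.
Variables (V : finType) (e h : rel V) (u : V) (g l : nat).
Hypotheses (h_sub : subrel h e) (h_acyclic : forall x y, h x y -> ~~ connect h y x).
Hypotheses (h_reach : forall v, connect h u v)
           (h_back : forall v w, e v w -> ~~ h v w -> connect h w v).
Hypotheses (e_girth : is_girth e g) (u_longest : is_longest_path_from e u l).

Definition hwalk (n : nat) (v : V) : bool :=
  [exists p : n.-tuple V, path h u p && (last u p == v)].

Definition level (v : V) : nat := \max_(n < l.+1 | hwalk n v) n.

Lemma hwalk_size_le p : path h u p -> size p <= l.
Proof.
move=> hp; apply: u_longest.2; rewrite /dipath (sub_path h_sub hp).
exact: acyclic_path_uniq h_acyclic hp.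
Qed.

Lemma hwalk_le_level p : path h u p -> size p <= level (last u p).
Proof.
move=> hp; have pl : size p < l.+1 by rewrite ltnS hwalk_size_le.
apply: (@leq_bigmax_cond _ _ _ (Ordinal pl)).
by apply/existsP; exists (in_tuple p); rewrite hp eqxx.
Qed.

Lemma level_hwalk v : exists2 p, path h u p & last u p = v /\ size p = level v.
Proof.
have /connectP [p hp vp] := h_reach v.
have pl : size p < l.+1 by rewrite ltnS hwalk_size_le.
have walk_p : hwalk (Ordinal pl) v.
  by apply/existsP; exists (in_tuple p); rewrite hp vp eqxx.
rewrite /level (@bigmax_eq_arg _ _ (fun n : 'I_l.+1 => hwalk n v) _ walk_p).
case: arg_maxnP => // n /existsP [q /andP [hq /eqP qv]] _.
by exists q; rewrite // size_tuple.
Qed.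

Lemma level_le v : level v <= l.
Proof. by have [p /hwalk_size_le + [_ <-]] := level_hwalk v. Qed.

Lemma level_lt v w : h v w -> level v < level w.
Proof.
move=> hvw; have [p hp [pv <-]] := level_hwalk v.
have := @hwalk_le_level (rcons p w).
by rewrite rcons_path hp pv hvw last_rcons size_rcons; apply.
Qed.

Lemma level_back v w : e v w -> ~~ h v w -> level w + (g - 1) <= level v.
Proof.
move=> evw nhvw; have /connectP [q0 hq0 vq0] := h_back evw nhvw.
case: (shortenP hq0) vq0 => q hq uq _ vq.
have gq : g - 1 <= size q.
  rewrite leq_subLR add1n; apply: (e_girth.2 w).
  by rewrite /dicycle -vq evw uq (sub_path h_sub hq).
have [p hp [pw <-]] := level_hwalk w.
have := @hwalk_le_level (p ++ q).
rewrite cat_path hp pw hq last_cat pw -vq size_cat => /(_ isT).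
by apply: leq_trans; rewrite leq_add2l.
Qed.

End Levels.

Lemma acyclic_coloring_of_potential (V : finType) (e : rel V) k
    (c : V -> 'I_k) (f : V -> nat) :
  (forall v w, e v w -> c v = c w -> f v < f w) -> acyclic_coloring e c.
Proof.
move=> rise x p /and3P [xp /rise last_x _] p_class.
have climb : path (relpre f ltn) x p.
  apply: (sub_in_path (P := fun y => c y == c x)); last exact: xp.
    by move=> v w /eqP cv /eqP cw /rise; rewrite cv cw; apply.
  by rewrite /= eqxx; apply/allP => y /p_class ->.
have x_last : f x <= f (last x p).
  have lt_trans : transitive (relpre f ltn) by move=> y ? ?; apply: ltn_trans.
  have /allP x_min := order_path_min lt_trans climb.
  by have := mem_last x p; rewrite inE => /predU1P [-> // | /x_min /ltnW].
have last_class : c (last x p) = c x.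
  by have := mem_last x p; rewrite inE => /predU1P [-> // | /p_class].
by have := leq_ltn_trans x_last (last_x last_class); rewrite ltnn.
Qed.

Lemma ltn_divn_ceil n m k : 0 < k -> n <= m -> n %/ k < ceil_div (m + 1) k.
Proof.
move=> k_gt0 nm; rewrite /ceil_div -addnA add1n prednK // divnDr // divnn k_gt0.
by rewrite addn1 ltnS leq_div2r.
Qed.

Lemma ltn_divn_add a b k : 0 < k -> a + k <= b -> a %/ k < b %/ k.
Proof.
by move=> k_gt0 /(leq_div2r k); rewrite divnDr // divnn k_gt0 addn1.
Qed.

Lemma girth_gt1 (V : finType) (e : rel V) g : loopless e -> is_girth e g -> 1 < g.
Proof.
move=> e_loopless [[x [[|y p] [xp <-]]] _] //.
by move: xp; rewrite /dicycle /= (negbTE (e_loopless x)).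
Qed.

Theorem mainTheorem16 (V : finType) (e : rel V) (g l : nat) :
  loopless e ->
  strongly_connected e ->
  1 < #|V| ->
  is_girth e g ->
  is_min_longest_path e l ->
  chiA_le e (ceil_div (l + 1) (g - 1)).
Proof.
move=> e_loopless e_sc _ e_girth [[u u_longest] _].
have k_gt0 : 0 < g - 1 by rewrite subn_gt0 (girth_gt1 e_loopless e_girth).
pose H := arcrel (max_rooted_dag e u).
have [/rooted_dagP [H_sub H_acyclic _] _] := max_rooted_dagP e u.
have H_reach := @max_rooted_dag_reach _ e u e_sc.
have H_back := @max_rooted_dag_back _ e u e_sc.
have lv_le := level_le H_sub H_acyclic H_reach u_longest.
exists (fun v => Ordinal (ltn_divn_ceil k_gt0 (lv_le v))).
apply: acyclic_coloring_of_potential => v w evw /(congr1 val) /= same_class.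
have [Hvw | nHvw] := boolP (H v w).
  exact: level_lt H_sub H_acyclic H_reach u_longest _ _ Hvw.
have := level_back H_sub H_acyclic H_reach H_back e_girth u_longest evw nHvw.
by move=> /(ltn_divn_add k_gt0); rewrite same_class ltnn.
Qed.
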